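(* Let $\alpha>0$, let $C_n=\bigl(1/\max\{i,j\}\bigr)_{i,j=1}^n$, and let $A_n=(\alpha I_n+C_n)^{-1}$ for $n\in\mathbb N$. Then each $A_n$ is Hermitian positive definite, $\inf_n\min\{|z|:z\in\sigma(A_n)\}>0$ and $\sup_n\|A_n\|_\infty<\infty$, but $\sup_n\|A_n^{-1}\|_\infty=\infty$.
   Context: $\|\cdot\|_\infty$ is the operator norm induced by the max-norm on $\mathbb C^n$ (maximum absolute row sum); $\sigma(\cdot)$ denotes the spectrum. *)

From HB Require Import structures.
From mathcomp Require Import all_boot all_order all_algebra.
From mathcomp Require Import all_classical all_reals.
From mathcomp.real_closed Require Import complex.
Set Implicit Arguments. Unset Strict Implicit. Unset Printing Implicit Defensive.
Import Order.TTheory GRing.Theory Num.Theory.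
Local Open Scope ring_scope.

(* C_n = (1 / max{i,j})_{i,j=1..n}; indices are 0-based in 'I_n, so the
   1-based index of i : 'I_n is i.+1. *)
Definition Cmat (R : realType) (n : nat) : 'M[R[i]]_n :=
  \matrix_(i < n, j < n) ((maxn i.+1 j.+1)%:R)^-1.

Definition Amat (R : realType) (alpha : R) (n : nat) : 'M[R[i]]_n :=
  invmx ((alpha%:C)%C%:M + Cmat R n).

Definition adjoint (R : realType) (m n : nat) (A : 'M[R[i]]_(m, n)) : 'M[R[i]]_(n, m) :=
  \matrix_(i < n, j < m) Num.conj (A j i).

Definition is_hermitian (R : realType) (n : nat) (A : 'M[R[i]]_n) : Prop :=
  adjoint A = A.

Definition is_posdef (R : realType) (n : nat) (A : 'M[R[i]]_n) : Prop :=
  forall x : 'cV[R[i]]_n, x != 0 -> 0 < (adjoint x *m A *m x) ord0 ord0.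

(* operator norm induced by the max-norm: maximum absolute row sum *)
Definition norm_inf (R : realType) (m n : nat) (A : 'M[R[i]]_(m, n)) : R :=
  \big[Num.max/0]_(i < m) \sum_(j < n) Normc.normc (A i j).

From HB Require Import structures.
From mathcomp Require Import all_boot all_order all_algebra.
From mathcomp Require Import all_classical all_reals.
From mathcomp.real_closed Require Import complex.
From mathcomp Require Import ring lra.
Import Order.TTheory GRing.Theory Num.Theory.
Local Open Scope ring_scope.
Set Implicit Arguments. Unset Strict Implicit. Unset Printing Implicit Defensive.

(* Let c_m = 1/(m+1) for m < n and c_n = 0, so that C_n = (c_(max i j)). Summation by
   parts gives (C_n x)_i = Z_i := sum_(i <= m < n) (c_m - c_(m+1)) S_m with the partial
   sums S_m = x_0 + ... + x_m, whence x^* C_n x = sum_m (c_m - c_(m+1)) |S_m|^2 >= 0 and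
   alpha I + C_n is positive definite, as is its inverse A_n. The same formula yields a
   discrete maximum principle: where |Z_k| is maximal, |Z_k| <= |((alpha I + C_n) x)_k|,
   so |x_i| <= 2 ||(alpha I + C_n) x||_oo / alpha and ||A_n||_oo <= 2 / alpha. The Schur
   test with the weights binom(2j, j) / 4^j puts the spectrum of C_n in the disc of radius
   4, so the eigenvalues of A_n have modulus at least 1 / (alpha + 4). Finally
   ||A_n^-1||_oo is at least the first row sum of C_n, the harmonic number H_n. *)

Lemma ler_norm_add_diffs (F : numDomainType) (u v w p q : F) :
  0 <= p -> 0 <= q -> `|v| <= `|u| -> `|w| <= `|u| ->
  `|u| <= `|u + p * (u - v) + q * (u - w)|.
Proof.
move=> p0 q0 vu wu; set y := _ + _ + _.
have pq0 : 0 <= 1 + p + q by rewrite !addr_ge0 ?ler01.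
have -> : `|u| = `|(1 + p + q) * u| - (p + q) * `|u|.
  by rewrite normrM (ger0_norm pq0); ring.
have -> : (1 + p + q) * u = y + p * v + q * w by rewrite /y; ring.
rewrite lerBlDr; apply: (le_trans (ler_normD _ _)).
rewrite normrM ger0_norm // mulrDl addrA lerD ?ler_wpM2l //.
apply: (le_trans (ler_normD _ _)).
by rewrite normrM ger0_norm // lerD2l ler_wpM2l.
Qed.

Lemma real_arg_max_exists (I : finType) (F : numDomainType) (i0 : I) (f : I -> F) :
  (forall i, f i \is Num.real) -> exists k, forall i, f i <= f k.
Proof.
move=> fR; have [] // := @real_arg_maxP F I i0 xpredT f.
by move=> k _ kmax; exists k => i; apply: kmax.
Qed.

Section MaxKernel.
Variables (F : numFieldType) (n : nat) (c : nat -> F).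
Hypothesis c_n : c n = 0.
Hypothesis c_decr : forall m, (m < n)%N -> c m.+1 < c m.

Definition maxker : 'M[F]_n := \matrix_(i, j) c (maxn i j).

Definition psum (x : 'cV[F]_n) (m : nat) : F := \sum_(j < n | (j <= m)%N) x j 0.

Definition maxker_tail (x : 'cV[F]_n) (i : nat) : F :=
  \sum_(m < n | (i <= m)%N) (c m - c m.+1) * psum x m.

Lemma sum_maxker_coef_diff k : (k < n)%N -> \sum_(m < n | (k <= m)%N) (c m - c m.+1) = c k.
Proof.
move=> kn; transitivity (\sum_(k <= m < n) (c m - c m.+1)); first by rewrite big_geq_mkord.
rewrite (eq_bigr (fun m => - (c m.+1 - c m))) => [|m _]; last by rewrite opprB.
by rewrite sumrN telescope_sumr ?(ltnW kn) // c_n sub0r opprK.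
Qed.

Lemma maxker_coef_diff_gt0 m : (m < n)%N -> 0 < c m - c m.+1.
Proof. by move=> mn; rewrite subr_gt0 c_decr. Qed.

Lemma maxker_coef_gt0 m : (m < n)%N -> 0 < c m.
Proof.
move=> mn; rewrite -(sum_maxker_coef_diff mn) (bigD1 (Ordinal mn)) //=.
rewrite ltr_pwDl ?maxker_coef_diff_gt0 // sumr_ge0 // => i _.
by rewrite ltW ?maxker_coef_diff_gt0.
Qed.

Lemma maxker_mulmxE (x : 'cV[F]_n) (i : 'I_n) : (maxker *m x) i 0 = maxker_tail x i.
Proof.
rewrite mxE.
under eq_bigr => j _ do
  rewrite mxE -sum_maxker_coef_diff ?gtn_max ?ltn_ord // mulr_suml big_mkcond /=.
rewrite exchange_big /maxker_tail [RHS]big_mkcond /=; apply: eq_bigr => m _.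
case: (leqP i m) => im /=; last by rewrite big1 // => j _; rewrite geq_max leqNgt im.
rewrite mulr_sumr [RHS]big_mkcond /=; apply: eq_bigr => j _.
by rewrite geq_max im /=; case: ifP; rewrite ?mulr0.
Qed.

Lemma maxker_tailS (x : 'cV[F]_n) i : (i < n)%N ->
  maxker_tail x i = (c i - c i.+1) * psum x i + maxker_tail x i.+1.
Proof.
move=> lin; rewrite /maxker_tail (bigD1 (Ordinal lin)) //=; congr (_ + _).
by apply: eq_bigl => m; rewrite ltn_neqAle andbC eq_sym.
Qed.

Lemma maxker_tail_out (x : 'cV[F]_n) i : (n <= i)%N -> maxker_tail x i = 0.
Proof.
by move=> ni; rewrite /maxker_tail big_pred0 // => m; rewrite leqNgt (leq_trans _ ni).
Qed.

Lemma psum_ord (x : 'cV[F]_n) (k : 'I_n) :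
  psum x k = x k 0 + \sum_(j < n | (j < k)%N) x j 0.
Proof.
rewrite /psum (bigD1 k) //=; congr (_ + _).
by apply: eq_bigl => m; rewrite ltn_neqAle andbC.
Qed.

Variable a : F.
Hypothesis a_gt0 : 0 < a.
Local Notation B := (a%:M + maxker).

Lemma shift_maxker_mulmxE (x : 'cV[F]_n) j : (B *m x) j 0 = a * x j 0 + maxker_tail x j.
Proof. by rewrite mulmxDl mul_scalar_mx !mxE -maxker_mulmxE mxE. Qed.

(* Writing a x_k = a (S_k - S_(k-1)) with S_m = (Z_m - Z_(m+1)) / (c_m - c_(m+1)),
   (B x)_k is Z_k plus nonnegative multiples of Z_k - Z_(k+1) and Z_k - Z_(k-1). *)
Lemma maxker_tail_max_le (x : 'cV[F]_n) (k : 'I_n) :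
  (forall m, `|maxker_tail x m| <= `|maxker_tail x k|) ->
  `|maxker_tail x k| <= `|(B *m x) k 0|.
Proof.
set Z := maxker_tail x => Zmax.
have dk := maxker_coef_diff_gt0 (ltn_ord k).
have Sk : psum x k = (Z k - Z k.+1) / (c k - c k.+1).
  by rewrite /Z (maxker_tailS x (ltn_ord k)) addrK mulrAC divff ?mul1r // gt_eqF.
have [q [w [q0 [wZ Sprev]]]] : exists q w, 0 <= q /\ `|w| <= `|Z k| /\
    - \sum_(j < n | (j < k)%N) x j 0 = q * (Z k - w).
  move: (ltn_ord k) (Zmax k.-1); case: (nat_of_ord k) => [|k'] /= kn wZ.
    exists 0, 0; rewrite normr0 normr_ge0 lexx mul0r.
    by rewrite big_pred0 ?oppr0 // => j; rewrite ltn0.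
  have dk' := maxker_coef_diff_gt0 (ltnW kn).
  exists (c k' - c k'.+1)^-1, (Z k'); rewrite invr_ge0 ltW //; split=> //; split=> //.
  rewrite /Z (maxker_tailS x (ltnW kn)) (eq_bigl (fun j : 'I_n => (j <= k')%N)) //.
  by rewrite -/(psum x k'); field; rewrite gt_eqF.
have xk : x k 0 = psum x k - \sum_(j < n | (j < k)%N) x j 0 by rewrite psum_ord addrK.
rewrite shift_maxker_mulmxE -/Z.
have -> : a * x k 0 + Z k = Z k + (a / (c k - c k.+1)) * (Z k - Z k.+1)
    + (a * q) * (Z k - w) by rewrite xk Sk Sprev; ring.
by apply: ler_norm_add_diffs; rewrite ?divr_ge0 ?mulr_ge0 // ltW.
Qed.

Lemma shift_maxker_max_principle (x : 'cV[F]_n) (M : F) :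
  (forall j, `|(B *m x) j 0| <= M) -> forall i, `|x i 0| <= 2 / a * M.
Proof.
move=> BxM i; set Z := maxker_tail x.
have [k Zk] := @real_arg_max_exists _ F i (fun k : 'I_n => `|Z k|) (fun k => normr_real (Z k)).
have Zmax m : `|Z m| <= `|Z k|.
  by case: (ltnP m n) => mn; [exact: (Zk (Ordinal mn)) | rewrite /Z maxker_tail_out // normr0].
have ZM : `|Z k| <= M := le_trans (maxker_tail_max_le Zmax) (BxM k).
have -> : x i 0 = ((B *m x) i 0 - Z i) / a.
  by rewrite shift_maxker_mulmxE /Z; field; rewrite gt_eqF.
rewrite normrM normfV (gtr0_norm a_gt0) mulrAC ler_pM2r ?invr_gt0 //.
by rewrite (le_trans (ler_normB _ _)) // mulr_natl mulr2n lerD // (le_trans (Zmax i)).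
Qed.

Lemma trmx_shift_maxker : B^T = B.
Proof. by apply/matrixP => i j; rewrite !mxE maxnC eq_sym. Qed.

Lemma shift_maxker_unit : B \in unitmx.
Proof.
have Binj (y : 'cV[F]_n) : B *m y = 0 -> y = 0.
  move=> By0; apply/matrixP => i j; rewrite (ord1 j) mxE; apply/normr0_eq0.
  apply/le_anti; rewrite normr_ge0 andbT -(mulr0 (2 / a)).
  by apply: shift_maxker_max_principle => l; rewrite By0 mxE normr0.
rewrite unitmxE unitfE; apply/negP => /det0P [v vn0 vB].
have /Binj/(congr1 trmx) : B *m v^T = 0 by rewrite -trmx_shift_maxker -trmx_mul vB trmx0.
by rewrite trmxK trmx0 => v0; rewrite v0 eqxx in vn0.
Qed.

(* Test the max principle on the vector of phases of the i-th row of B^-1. *)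
Lemma shift_maxker_inv_row_sum_le (i : 'I_n) : \sum_j `|invmx B i j| <= 2 / a.
Proof.
set A := invmx B.
pose y : 'cV[F]_n := \col_j (if A i j == 0 then 0 else `|A i j| / A i j).
have y_le1 j : `|y j 0| <= 1.
  rewrite mxE; case: eqP => [_|/eqP Aij]; first by rewrite normr0 ler01.
  by rewrite normrM normfV normr_id divff ?normr_eq0.
have Ay : (A *m y) i 0 = \sum_j `|A i j|.
  rewrite mxE; apply: eq_bigr => j _; rewrite mxE.
  by case: eqP => [->|/eqP Aij]; rewrite ?normr0 ?mulr0 // mulrC mulfVK.
rewrite -[leLHS]ger0_norm ?sumr_ge0 // -Ay -[2 / a]mulr1.
apply: shift_maxker_max_principle => j.
by rewrite mulmxA mulmxV ?shift_maxker_unit // mul1mx y_le1.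
Qed.

End MaxKernel.

Lemma maxker_tail_form (C : numClosedFieldType) n (c : nat -> C) (x : 'cV[C]_n) :
  \sum_i (x i 0)^* * maxker_tail c x i =
  \sum_(m < n) (c m - c m.+1) * (psum x m * (psum x m)^*).
Proof.
under eq_bigr => i _ do rewrite mulr_sumr big_mkcond /=.
rewrite exchange_big /=; apply: eq_bigr => m _; rewrite -big_mkcond -mulr_suml.
have -> : \sum_(i < n | (i <= m)%N) (x i 0)^* = (psum x m)^* by rewrite rmorph_sum.
by rewrite mulrCA [_^* * _]mulrC.
Qed.

Section Adjoint.
Variable R : realType.

Lemma adjointE m p (M : 'M[R[i]]_(m, p)) : adjoint M = map_mx Num.conj M^T.
Proof. by apply/matrixP => i j; rewrite !mxE. Qed.

Lemma adjointM m p q (M : 'M[R[i]]_(m, p)) (N : 'M[R[i]]_(p, q)) :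
  adjoint (M *m N) = adjoint N *m adjoint M.
Proof. by rewrite !adjointE trmx_mul map_mxM. Qed.

Lemma adjoint_formE n (A : 'M[R[i]]_n) (x y : 'cV[R[i]]_n) :
  (adjoint x *m A *m y) 0 0 = \sum_i (x i 0)^* * (A *m y) i 0.
Proof. by rewrite -mulmxA mxE; apply: eq_bigr => i _; rewrite mxE. Qed.

Lemma hermitian_invmx n (A : 'M[R[i]]_n) : is_hermitian A -> is_hermitian (invmx A).
Proof. by rewrite /is_hermitian !adjointE trmx_inv map_invmx => ->. Qed.

Lemma posdef_invmx n (A : 'M[R[i]]_n) :
  is_hermitian A -> A \in unitmx -> is_posdef A -> is_posdef (invmx A).
Proof.
move=> hA uA pA x xn0; have ->: x = A *m (invmx A *m x) by rewrite mulKVmx.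
have yn0 : invmx A *m x != 0.
  by apply: contraNneq xn0 => y0; rewrite -(mulKVmx uA x) y0 mulmx0.
by rewrite adjointM hA -!mulmxA mulKmx // mulmxA pA.
Qed.

End Adjoint.

Section ShiftMaxkerPosdef.
Variables (R : realType) (n : nat) (c : nat -> R[i]) (a : R[i]).
Hypothesis c_n : c n = 0.
Hypothesis c_decr : forall m, (m < n)%N -> c m.+1 < c m.
Hypothesis a_gt0 : 0 < a.
Local Notation B := (a%:M + maxker n c).

Lemma shift_maxker_hermitian : is_hermitian B.
Proof.
rewrite /is_hermitian; apply/matrixP => i j; rewrite !mxE geC0_conj.
  by rewrite maxnC eq_sym.
have c_ge0 : 0 <= c (maxn j i).
  by rewrite ltW // (maxker_coef_gt0 c_n c_decr) // gtn_max !ltn_ord.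
by rewrite addr_ge0 // mulrn_wge0 // ltW.
Qed.

Lemma shift_maxker_posdef : is_posdef B.
Proof.
move=> x xn0; rewrite adjoint_formE.
under eq_bigr => i _ do rewrite (shift_maxker_mulmxE c_n) mulrDr mulrCA -normCKC.
rewrite big_split /= maxker_tail_form // -mulr_sumr ltr_wpDr //.
  apply: sumr_ge0 => m _.
  by rewrite mulr_ge0 ?mul_conjC_ge0 ?ltW ?(maxker_coef_diff_gt0 c_decr).
rewrite mulr_gt0 //; have [i xi0] : exists i, x i 0 != 0.
  apply/existsP; apply: contraR xn0 => /existsPn x0.
  by apply/eqP/matrixP => i j; rewrite (ord1 j) mxE; apply/eqP/negPn/x0.
rewrite (bigD1 i) //= ltr_wpDr ?exprn_gt0 ?normr_gt0 //.
by apply: sumr_ge0 => j _; rewrite exprn_ge0.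
Qed.

End ShiftMaxkerPosdef.

Lemma schur_eigen_norm_le (F : numFieldType) n (K : 'M[F]_n) (w : 'I_n -> F)
    (lam mu : F) (v : 'rV[F]_n) :
  (forall i j, 0 <= K i j) -> (forall i, 0 < w i) ->
  (forall j, \sum_i w i * K i j <= lam * w j) ->
  v != 0 -> v *m K = mu *: v -> `|mu| <= lam.
Proof.
move=> K_ge0 w_gt0 Kw vn0 vK.
have [i0 vi0] : exists i0, v 0 i0 != 0.
  apply/existsP; apply: contraR vn0 => /existsPn v0.
  by apply/eqP/matrixP => i j; rewrite (ord1 i) mxE; apply/eqP/negPn/v0.
pose r i := `|v 0 i| / w i.
have r_real i : r i \is Num.real by rewrite ger0_real // divr_ge0 // ltW.
have [k rk] := @real_arg_max_exists _ F i0 r r_real.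
have vw i : `|v 0 i| <= r k * w i by rewrite -ler_pdivrMr //; exact: rk.
have vk : `|v 0 k| = r k * w k by rewrite mulfVK ?gt_eqF.
have rk_gt0 : 0 < r k by rewrite (lt_le_trans _ (rk i0)) ?divr_gt0 ?normr_gt0.
rewrite -(ler_pM2r (_ : 0 < `|v 0 k|)); last by rewrite vk mulr_gt0.
have -> : `|mu| * `|v 0 k| = `|\sum_i v 0 i * K i k|.
  by have := congr1 (fun M : 'rV[F]_n => M 0 k) vK; rewrite !mxE => ->; rewrite normrM.
apply: le_trans (ler_norm_sum _ _ _) _.
apply: le_trans (_ : \sum_i r k * (w i * K i k) <= _).
  by apply: ler_sum => i _; rewrite normrM (ger0_norm (K_ge0 i k)) mulrA ler_wpM2r.
by rewrite -mulr_sumr vk mulrCA ler_pM2l.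
Qed.

Section Wallis.
Variable R : realFieldType.

(* wallis m = binom(2m, m) / 4^m *)
Fixpoint wallis (m : nat) : R :=
  if m is m'.+1 then wallis m' * (2 * m'%:R + 1) / (2 * m'%:R + 2) else 1.

Lemma wallisS m : wallis m.+1 = wallis m * (2 * m%:R + 1) / (2 * m%:R + 2).
Proof. by []. Qed.

Arguments wallis : simpl never.

Lemma wallis_gt0 m : 0 < wallis m.
Proof.
elim: m => [|m IH]; first exact: ltr01.
by rewrite wallisS mulr_gt0 ?invr_gt0 ?mulr_gt0 ?ltr_wpDl ?mulr_ge0 ?ler0n.
Qed.

Lemma wallis_le m : wallis m.+1 <= wallis m.
Proof.
have m0 : 0 <= m%:R :> R := ler0n _ m.
rewrite wallisS -mulrA ler_piMr ?(ltW (wallis_gt0 m)) // ler_pdivrMr ?mul1r; lra.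
Qed.

Lemma wallis_sum k : \sum_(j < k.+1) wallis j = (2 * k%:R + 1) * wallis k.
Proof.
elim: k => [|k IH]; first by rewrite big_ord1 mulr0 add0r mul1r.
rewrite big_ord_recr IH /= wallisS -natr1; field.
by rewrite gt_eqF // ltr_wpDl ?mulr_ge0 ?ler0n.
Qed.

Lemma wallis_divS j : wallis j / j.+1%:R = 2 * (wallis j - wallis j.+1).
Proof.
rewrite wallisS -natr1; field.
by rewrite !gt_eqF // ltr_wpDl ?mulr_ge0 ?ler0n.
Qed.

Lemma wallis_max_sum k d :
  \sum_(j < k.+1 + d) wallis j / (maxn j.+1 k.+1)%:R =
  (2 * k%:R + 1) / k.+1%:R * wallis k + 2 * (wallis k.+1 - wallis (k.+1 + d)).
Proof.
elim: d => [|d IH].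
  rewrite addn0 subrr mulr0 addr0.
  under eq_bigr => j _ do rewrite (maxn_idPr (ltn_ord j)).
  by rewrite -mulr_suml wallis_sum mulrAC.
rewrite addnS big_ord_recr /= IH.
by rewrite (maxn_idPl (leqW (leq_addr d k.+1))) wallis_divS; ring.
Qed.

Lemma wallis_max_sum_le n k : (k < n)%N ->
  \sum_(j < n) wallis j / (maxn j.+1 k.+1)%:R <= 4 * wallis k.
Proof.
move=> kn; rewrite -(subnKC kn) wallis_max_sum.
have -> : 4 * wallis k = 2 * wallis k + 2 * wallis k by ring.
apply: lerD.
  apply: ler_wpM2r; first exact: ltW (wallis_gt0 k).
  by rewrite ler_pdivrMr ?ltr0n // -natr1; have := ler0n R k; lra.
rewrite ler_pM2l ?ltr0n // lerBlDr (le_trans (wallis_le k)) // lerDl.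
exact: ltW (wallis_gt0 _).
Qed.

End Wallis.

Lemma norm_inf_le (R : realType) m p (M : 'M[R[i]]_(m, p)) (b : R) :
  0 <= b -> (forall i, \sum_j `|M i j| <= (b%:C)%C) -> norm_inf M <= b.
Proof. by move=> b0 Mb; apply: bigmax_le => // i _; rewrite -lecR rmorph_sum; apply: Mb. Qed.

Lemma ler_row_norm_inf (R : realType) m p (M : 'M[R[i]]_(m, p)) i :
  \sum_j `|M i j| <= ((norm_inf M)%:C)%C.
Proof. by rewrite -[X in X <= _]rmorph_sum lecR; exact: le_bigmax. Qed.

Lemma harmonic_pow2_ge (F : numFieldType) k :
  k%:R / 2 <= \sum_(j < 2 ^ k) (j.+1%:R)^-1 :> F.
Proof.
elim: k => [|k IH]; first by rewrite mul0r sumr_ge0 // => j _; rewrite invr_ge0.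
have -> : k.+1%:R / 2 = k%:R / 2 + 1 / 2 :> F by rewrite -natr1 mulrDl.
rewrite expnS mul2n -addnn big_split_ord /= lerD //.
apply: le_trans (_ : \sum_(i < 2 ^ k) ((2 ^ k.+1)%:R)^-1 <= _).
  rewrite sumr_const card_ord expnS natrM invfM -[X in _ <= X]mulr_natr mulfVK ?div1r //.
  by rewrite pnatr_eq0 expn_eq0.
apply: ler_sum => i _; rewrite lef_pV2 ?posrE ?ltr0n ?expn_gt0 // ler_nat.
by rewrite expnS mul2n -addnn -addnS leq_add2l.
Qed.

Lemma eigenvalue_invmx (F : fieldType) n (A : 'M[F]_n) z :
  A \in unitmx -> eigenvalue (invmx A) z -> z != 0 /\ eigenvalue A z^-1.
Proof.
move=> uA /eigenvalueP [v vA vn0].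
have v_zvA : v = z *: (v *m A) by rewrite scalemxAl -vA mulmxKV.
have z0 : z != 0 by apply: contraNneq vn0 => z0; rewrite v_zvA z0 scale0r.
split=> //; apply/eigenvalueP; exists v => //.
by rewrite {2}v_zvA scalerA mulVf ?scale1r.
Qed.

Section Cmat.
Variable R : realType.

Definition harm_tail n m : R[i] := if (m < n)%N then (m.+1%:R)^-1 else 0.

Lemma harm_tail_out n : harm_tail n n = 0.
Proof. by rewrite /harm_tail ltnn. Qed.

Lemma harm_tail_decr n m : (m < n)%N -> harm_tail n m.+1 < harm_tail n m.
Proof.
move=> mn; rewrite /harm_tail mn; case: ifP => _; last by rewrite invr_gt0 ltr0n.
by rewrite ltf_pV2 ?posrE ?ltr0n // ltr_nat.
Qed.

Lemma Cmat_maxker n : Cmat R n = maxker n (harm_tail n).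
Proof. by apply/matrixP => i j; rewrite !mxE /harm_tail -maxnSS geq_max !ltn_ord. Qed.

Lemma Cmat_eigen_norm_le n (v : 'rV[R[i]]_n) mu :
  v != 0 -> v *m Cmat R n = mu *: v -> `|mu| <= 4.
Proof.
apply: (schur_eigen_norm_le (w := fun i => (wallis R i)%:C%C)).
- by move=> i j; rewrite mxE invr_ge0 ler0n.
- by move=> i; rewrite ltcR wallis_gt0.
move=> j; rewrite (eq_bigr (fun i : 'I_n => (wallis R i / (maxn i.+1 j.+1)%:R)%:C%C)).
  rewrite -rmorph_sum -[4]/(4%:R) -(rmorph_nat (real_complex R)) -rmorphM lecR.
  exact: wallis_max_sum_le.
by move=> i _; rewrite mxE rmorphM fmorphV rmorph_nat.
Qed.

End Cmat.

Section Amat.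
Variables (R : realType) (alpha : R) (n : nat).
Hypothesis alpha_gt0 : 0 < alpha.
Local Notation a := ((alpha%:C)%C : R[i]).

Let a_gt0 : 0 < a.
Proof. by rewrite ltcR. Qed.

Let c_n := harm_tail_out R n.
Let c_decr := @harm_tail_decr R n.
Let B_unit : a%:M + maxker n (harm_tail R n) \in unitmx :=
  shift_maxker_unit c_n c_decr a_gt0.

Lemma AmatE : Amat alpha n = invmx (a%:M + maxker n (harm_tail R n)).
Proof. by rewrite /Amat Cmat_maxker. Qed.

Lemma Amat_hermitian : is_hermitian (Amat alpha n).
Proof. by rewrite AmatE; exact: hermitian_invmx (shift_maxker_hermitian c_n c_decr a_gt0). Qed.

Lemma Amat_posdef : is_posdef (Amat alpha n).
Proof.
rewrite AmatE; apply: posdef_invmx.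
- exact: shift_maxker_hermitian c_n c_decr a_gt0.
- exact: B_unit.
- exact: shift_maxker_posdef c_n c_decr a_gt0.
Qed.

Lemma Amat_norm_inf_le : norm_inf (Amat alpha n) <= 2 / alpha.
Proof.
apply: norm_inf_le => [|i]; first by rewrite divr_ge0 ?ltW.
rewrite AmatE fmorph_div rmorph_nat.
exact (shift_maxker_inv_row_sum_le c_n c_decr a_gt0 i).
Qed.

Lemma Amat_eigen_ge z : eigenvalue (Amat alpha n) z -> ((alpha + 4)^-1)%:C%C <= `|z|.
Proof.
rewrite AmatE => /(eigenvalue_invmx B_unit).
case=> z0 /eigenvalueP [v vB vn0].
have vC : v *m Cmat R n = (z^-1 - a) *: v.
  by rewrite Cmat_maxker scalerBl -vB mulmxDr mul_mx_scalar addrC addKr.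
have z_le : `|z^-1| <= a + 4.
  rewrite -(subrK a z^-1) (le_trans (ler_normD _ _)) // addrC (gtr0_norm a_gt0).
  by rewrite lerD2l (Cmat_eigen_norm_le vn0 vC).
have a4_gt0 : 0 < a + 4 by rewrite addr_gt0.
rewrite fmorphV rmorphD rmorph_nat -[`|z|]invrK.
by rewrite lef_pV2 ?posrE ?invr_gt0 ?normr_gt0 // -normfV.
Qed.

Lemma harmonic_le_norm_inf : (0 < n)%N ->
  \sum_(j < n) (j.+1%:R)^-1 <= norm_inf (a%:M + Cmat R n).
Proof.
move=> n_gt0; pose i0 := Ordinal n_gt0.
rewrite -lecR (le_trans _ (ler_row_norm_inf _ i0)) //.
rewrite rmorph_sum; apply: ler_sum => j _; rewrite fmorphV rmorph_nat.
have e : (a%:M + Cmat R n) i0 j = a *+ (i0 == j) + (j.+1%:R)^-1.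
  by rewrite !mxE (maxn_idPr _).
have a_ge0 : 0 <= a *+ (i0 == j) by rewrite mulrn_wge0 ?ltW.
rewrite e (le_trans _ (real_ler_norm _)) ?lerDr //.
by rewrite ger0_real // addr_ge0 // invr_ge0.
Qed.

End Amat.

Theorem proposition9 (R : realType) (alpha : R) (halpha : 0 < alpha) :
  (forall n : nat, (0 < n)%N -> is_hermitian (Amat alpha n) /\ is_posdef (Amat alpha n)) /\
  (exists delta : R, 0 < delta /\
     forall n : nat, (0 < n)%N ->
       forall z : R[i], eigenvalue (Amat alpha n) z -> (delta%:C)%C <= `|z|) /\
  (exists M : R, forall n : nat, (0 < n)%N -> norm_inf (Amat alpha n) <= M) /\
  (forall M : R, exists n : nat, (0 < n)%N /\ M < norm_inf (invmx (Amat alpha n))).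
Proof.
split; first by move=> n _; split; [exact: Amat_hermitian | exact: Amat_posdef].
split.
  exists (alpha + 4)^-1; split; first by rewrite invr_gt0 addr_gt0.
  by move=> n _ z; exact: Amat_eigen_ge.
split; first by exists (2 / alpha) => n _; exact: Amat_norm_inf_le.
move=> M; pose N := Num.Def.archi_bound (2 * `|M|).
have MN : 2 * `|M| < N%:R by apply: archi_boundP; rewrite mulr_ge0.
exists (2 ^ N)%N; split; first by rewrite expn_gt0.
rewrite /Amat invmxK (lt_le_trans _ (harmonic_le_norm_inf halpha _)) ?expn_gt0 //.
apply: lt_le_trans (harmonic_pow2_ge _ N).
by have := real_ler_norm (num_real M); lra.
Qed.
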